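(* Let $\tau$ be a distributive triangle function on $\Delta^+$, $\Sigma$ a ring of subsets of $\Omega\ne\emptyset$, $\gamma$ a $\tau$-decomposable measure on $\Sigma$, and $E\in\Sigma$ with $\gamma_E=\varepsilon_0$. Then $\int_E f\,d\gamma=\varepsilon_0$ for every measurable $f:\Omega\to[0,+\infty]$ that is $\gamma$-integrable on $E$ (in particular for every simple function).
   Context: $\Delta^+$: functions $F:[-\infty,+\infty]\to[0,1]$ non-decreasing, left-continuous on $\mathbb{R}$, $F(x)=0$ for $x\le0$, $F(+\infty)=1$, ordered pointwise; $\varepsilon_0(x)=1$ if $x>0$, else $0$. Triangle function: symmetric, associative $\tau:\Delta^+\times\Delta^+\to\Delta^+$, non-decreasing in each variable, identity $\varepsilon_0$; $G\oplus H=\tau(G,H)$, $\bigoplus_{k=1}^nG_k=\tau(G_1,\bigoplus_{k=2}^nG_k)$. $c\odot G=\varepsilon_0$ if $c=0$, $(c\odot G)(x)=G(x/c)$ if $c>0$; $\tau$ distributive if $c\odot(G\oplus H)=(c\odot G)\oplus(c\odot H)$ for all $c\ge0$. $\tau$-decomposable measure: $\gamma:\Sigma\to\Delta^+$, $\gamma_\emptyset=\varepsilon_0$, $\gamma_{A\cup B}=\tau(\gamma_A,\gamma_B)$ for disjoint $A,B\in\Sigma$. Simple function $\sum_{i=1}^nx_i\chi_{E_i}$ ($x_i\in[0,\infty)$, $E_i\in\Sigma$ pairwise disjoint), $\int_Ef\,d\gamma=\bigoplus_ix_i\odot\gamma_{E\cap E_i}$. Measurable: pointwise limit of simple functions. $\mathcal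 S_{f,E}$: simple $\mathfrak f\le f$ on $E$. $f$ is $\gamma$-integrable on $E$ if some $H\in\Delta^+$ satisfies $\int_E\mathfrak f\,d\gamma\ge H$ for all $\mathfrak f\in\mathcal S_{f,E}$; then $\int_Ef\,d\gamma=\inf\{\int_E\mathfrak f\,d\gamma:\mathfrak f\in\mathcal S_{f,E}\}$ in $(\Delta^+,\le)$. *)

From Stdlib Require Import Reals Lra List ClassicalDescription.
From Coquelicot Require Import Coquelicot.
Open Scope R_scope.

(* Distribution functions are represented as raw maps [-oo,+oo] -> R;
   membership in Delta^+ is a predicate. *)
Definition dfun := Rbar -> R.

Definition in_Dplus (F : dfun) : Prop :=
  (forall x, 0 <= F x <= 1) /\
  (forall x y, Rbar_le x y -> F x <= F y) /\
  (forall x : R, forall eps, 0 < eps -> exists delta, 0 < delta /\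
       forall y : R, x - delta < y < x -> Rabs (F (Finite y) - F (Finite x)) < eps) /\
  (forall x, Rbar_le x (Finite 0) -> F x = 0) /\
  F p_infty = 1.

Definition dle (F G : dfun) : Prop := forall x, F x <= G x.

Definition eps0 : dfun := fun x => if Rbar_lt_dec (Finite 0) x then 1 else 0.

Definition Rbar_divr (x : Rbar) (c : R) : Rbar :=
  match x with
  | Finite r => Finite (r / c)
  | p_infty => p_infty
  | m_infty => m_infty
  end.

Definition dscale (c : R) (G : dfun) : dfun :=
  if Req_EM_T c 0 then eps0 else fun x => G (Rbar_divr x c).

Definition is_triangle_function (tau : dfun -> dfun -> dfun) : Prop :=
  (forall G H, in_Dplus G -> in_Dplus H -> in_Dplus (tau G H)) /\
  (forall G H, in_Dplus G -> in_Dplus H -> tau G H = tau H G) /\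
  (forall G H K, in_Dplus G -> in_Dplus H -> in_Dplus K ->
     tau G (tau H K) = tau (tau G H) K) /\
  (forall G G' H, in_Dplus G -> in_Dplus G' -> in_Dplus H ->
     dle G G' -> dle (tau G H) (tau G' H)) /\
  (forall G H H', in_Dplus G -> in_Dplus H -> in_Dplus H' ->
     dle H H' -> dle (tau G H) (tau G H')) /\
  (forall G, in_Dplus G -> tau G eps0 = G).

Definition is_distributive (tau : dfun -> dfun -> dfun) : Prop :=
  forall c G H, 0 <= c -> in_Dplus G -> in_Dplus H ->
    dscale c (tau G H) = tau (dscale c G) (dscale c H).

Definition bigoplus (tau : dfun -> dfun -> dfun) (l : list dfun) : dfun :=
  fold_right tau eps0 l.

Definition set_empty {Om : Type} : Om -> Prop := fun _ => False.
Definition set_union {Om : Type} (A B : Om -> Prop) : Om -> Prop := fun w => A w \/ B w.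
Definition set_inter {Om : Type} (A B : Om -> Prop) : Om -> Prop := fun w => A w /\ B w.
Definition set_diff {Om : Type} (A B : Om -> Prop) : Om -> Prop := fun w => A w /\ ~ B w.
Definition disjoint {Om : Type} (A B : Om -> Prop) : Prop := forall w, ~ (A w /\ B w).

Definition is_ring_of_sets {Om : Type} (Sigma : (Om -> Prop) -> Prop) : Prop :=
  Sigma set_empty /\
  (forall A B, Sigma A -> Sigma B -> Sigma (set_union A B)) /\
  (forall A B, Sigma A -> Sigma B -> Sigma (set_diff A B)).

Definition is_decomposable_measure {Om : Type} (tau : dfun -> dfun -> dfun)
  (Sigma : (Om -> Prop) -> Prop) (gamma : (Om -> Prop) -> dfun) : Prop :=
  (forall A, Sigma A -> in_Dplus (gamma A)) /\
  gamma set_empty = eps0 /\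
  (forall A B, Sigma A -> Sigma B -> disjoint A B ->
     gamma (set_union A B) = tau (gamma A) (gamma B)).

(* A simple function, given by its representation [(x_1,E_1);...;(x_n,E_n)]
   with x_i in [0,oo), E_i in Sigma pairwise disjoint. *)
Definition simple_rep {Om : Type} (Sigma : (Om -> Prop) -> Prop)
  (s : list (R * (Om -> Prop))) : Prop :=
  (forall p, In p s -> 0 <= fst p /\ Sigma (snd p)) /\
  (forall i j, (i < j < length s)%nat ->
     disjoint (snd (nth i s (0, set_empty))) (snd (nth j s (0, set_empty)))).

Definition simple_val {Om : Type} (s : list (R * (Om -> Prop))) (w : Om) : R :=
  fold_right (fun p acc =>
    (if excluded_middle_informative (snd p w) then fst p else 0) + acc) 0 s.

Definition simple_integral {Om : Type} (tau : dfun -> dfun -> dfun)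
  (gamma : (Om -> Prop) -> dfun) (E : Om -> Prop) (s : list (R * (Om -> Prop))) : dfun :=
  bigoplus tau (map (fun p => dscale (fst p) (gamma (set_inter E (snd p)))) s).

Definition measurable_fun_ {Om : Type} (Sigma : (Om -> Prop) -> Prop) (f : Om -> Rbar) : Prop :=
  exists u : nat -> list (R * (Om -> Prop)),
    (forall n, simple_rep Sigma (u n)) /\
    (forall w, is_lim_seq (fun n => simple_val (u n) w) (f w)).

Definition in_S {Om : Type} (Sigma : (Om -> Prop) -> Prop) (f : Om -> Rbar)
  (E : Om -> Prop) (s : list (R * (Om -> Prop))) : Prop :=
  simple_rep Sigma s /\ forall w, E w -> Rbar_le (Finite (simple_val s w)) (f w).

Definition integrable {Om : Type} (tau : dfun -> dfun -> dfun)
  (Sigma : (Om -> Prop) -> Prop) (gamma : (Om -> Prop) -> dfun)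
  (f : Om -> Rbar) (E : Om -> Prop) : Prop :=
  exists H, in_Dplus H /\
    forall s, in_S Sigma f E s -> dle H (simple_integral tau gamma E s).

Definition integral_is {Om : Type} (tau : dfun -> dfun -> dfun)
  (Sigma : (Om -> Prop) -> Prop) (gamma : (Om -> Prop) -> dfun)
  (f : Om -> Rbar) (E : Om -> Prop) (G : dfun) : Prop :=
  in_Dplus G /\
  (forall s, in_S Sigma f E s -> dle G (simple_integral tau gamma E s)) /\
  (forall H, in_Dplus H ->
     (forall s, in_S Sigma f E s -> dle H (simple_integral tau gamma E s)) -> dle H G).

(* Proof idea: [eps0] is the top of Delta^+, so [gamma_E = gamma_(E n A) (+) gamma_(E \ A)
   <= gamma_(E n A) (+) eps0 = gamma_(E n A)] forces [gamma_(E n A) = eps0] for every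
   [A] in the ring.  Since [c (.) eps0 = eps0], every simple integral over [E] is then
   [eps0], and as the zero function lies in [S_(f,E)] the infimum is [eps0] as well. *)

From Stdlib Require Import Reals Lra Lia List Classical FunctionalExtensionality PropExtensionality.
From Coquelicot Require Import Coquelicot.
Open Scope R_scope.

Lemma in_Dplus_eps0 : in_Dplus eps0.
Proof.
  unfold in_Dplus, eps0.
  split; [|split; [|split; [|split]]].
  - intro x; destruct (Rbar_lt_dec (Finite 0) x); lra.
  - intros x y hxy.
    destruct (Rbar_lt_dec (Finite 0) x) as [hx|hx];
      destruct (Rbar_lt_dec (Finite 0) y) as [hy|hy]; try lra.
    exfalso; apply hy, (Rbar_lt_le_trans _ _ _ hx hxy).
  - intros x e he.
    destruct (Rlt_le_dec 0 x) as [hx|hx].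
    + exists x; split; [exact hx|].
      intros y hy.
      destruct (Rbar_lt_dec (Finite 0) (Finite y)) as [h|h]; [|simpl in h; lra].
      destruct (Rbar_lt_dec (Finite 0) (Finite x)) as [h'|h']; [|simpl in h'; lra].
      rewrite Rminus_diag, Rabs_R0; exact he.
    + exists 1; split; [lra|].
      intros y hy.
      destruct (Rbar_lt_dec (Finite 0) (Finite y)) as [h|h]; [simpl in h; lra|].
      destruct (Rbar_lt_dec (Finite 0) (Finite x)) as [h'|h']; [simpl in h'; lra|].
      rewrite Rminus_diag, Rabs_R0; exact he.
  - intros x hx.
    destruct (Rbar_lt_dec (Finite 0) x) as [h|h]; [|reflexivity].
    exfalso; exact (Rbar_lt_not_le _ _ h hx).
  - destruct (Rbar_lt_dec (Finite 0) p_infty) as [_|h]; [reflexivity|].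
    exfalso; apply h; exact I.
Qed.

Lemma dle_eps0 (F : dfun) : in_Dplus F -> dle F eps0.
Proof.
  intros [Fbound [_ [_ [Fzero _]]]] x; unfold eps0.
  destruct (Rbar_lt_dec (Finite 0) x) as [hx|hx].
  - apply Fbound.
  - rewrite Fzero; [lra|].
    destruct x as [r| |]; simpl in *; auto; lra.
Qed.

Lemma dle_antisym (F G : dfun) : dle F G -> dle G F -> F = G.
Proof.
  intros hFG hGF; apply functional_extensionality; intro x.
  apply Rle_antisym; auto.
Qed.

Lemma dscale_eps0 (c : R) : 0 <= c -> dscale c eps0 = eps0.
Proof.
  intro hc; unfold dscale.
  destruct (Req_EM_T c 0) as [_|hc0]; [reflexivity|].
  assert (cpos : 0 < c) by lra.
  apply functional_extensionality; intros [r| |]; unfold eps0; simpl; [|reflexivity|reflexivity].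
  destruct (Rbar_lt_dec (Finite 0) (Finite (r / c))) as [h|h];
    destruct (Rbar_lt_dec (Finite 0) (Finite r)) as [h'|h']; simpl in *;
    try reflexivity; exfalso.
  - apply h'; apply Rnot_le_lt; intro hr.
    assert (r / c <= 0) by (apply Rmult_le_0_r; [exact hr|left; apply Rinv_0_lt_compat, cpos]).
    lra.
  - apply h; apply Rdiv_lt_0_compat; assumption.
Qed.

Lemma set_ext {Om : Type} (A B : Om -> Prop) : (forall w, A w <-> B w) -> A = B.
Proof.
  intro hAB; apply functional_extensionality; intro w.
  apply propositional_extensionality, hAB.
Qed.

Lemma ring_of_sets_inter {Om : Type} (Sigma : (Om -> Prop) -> Prop) (A B : Om -> Prop) :
  is_ring_of_sets Sigma -> Sigma A -> Sigma B -> Sigma (set_inter A B).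
Proof.
  intros [_ [_ Sdiff]] SA SB.
  replace (set_inter A B) with (set_diff A (set_diff A B)) by
    (apply set_ext; intro w; unfold set_diff, set_inter; split;
       [intros [hA hB]; split; [exact hA|apply NNPP; tauto] | tauto]).
  auto.
Qed.

Lemma set_inter_union_diff {Om : Type} (E A : Om -> Prop) :
  set_union (set_inter E A) (set_diff E A) = E.
Proof.
  apply set_ext; intro w; unfold set_union, set_inter, set_diff.
  destruct (classic (A w)); tauto.
Qed.

Section DecomposableMeasure.

Variables (Om : Type) (tau : dfun -> dfun -> dfun).
Variables (Sigma : (Om -> Prop) -> Prop) (gamma : (Om -> Prop) -> dfun).
Hypothesis tau_triangle : is_triangle_function tau.
Hypothesis Sigma_ring : is_ring_of_sets Sigma.
Hypothesis gamma_decomposable : is_decomposable_measure tau Sigma gamma.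

Lemma decomposable_measure_le_inter (E A : Om -> Prop) :
  Sigma E -> Sigma A -> dle (gamma E) (gamma (set_inter E A)).
Proof.
  destruct tau_triangle as [_ [_ [_ [_ [tau_monor tau_eps0]]]]].
  destruct Sigma_ring as [_ [_ Sdiff]].
  destruct gamma_decomposable as [gamma_Dplus [_ gamma_union]].
  intros SE SA.
  assert (SEA : Sigma (set_inter E A)) by (apply ring_of_sets_inter; assumption).
  assert (SEmA : Sigma (set_diff E A)) by auto.
  rewrite <- (set_inter_union_diff E A) at 1.
  rewrite gamma_union by (auto; intros w [[_ hA] [_ hnA]]; auto).
  rewrite <- (tau_eps0 (gamma (set_inter E A))) at 2 by auto.
  apply tau_monor; auto using in_Dplus_eps0, dle_eps0.
Qed.

Lemma decomposable_measure_inter_eps0 (E A : Om -> Prop) :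
  Sigma E -> gamma E = eps0 -> Sigma A -> gamma (set_inter E A) = eps0.
Proof.
  intros SE gammaE SA.
  assert (SEA : Sigma (set_inter E A)) by (apply ring_of_sets_inter; assumption).
  apply dle_antisym.
  - apply dle_eps0, gamma_decomposable, SEA.
  - rewrite <- gammaE; apply decomposable_measure_le_inter; assumption.
Qed.

Lemma simple_integral_eps0 (E : Om -> Prop) (s : list (R * (Om -> Prop))) :
  Sigma E -> gamma E = eps0 -> simple_rep Sigma s -> simple_integral tau gamma E s = eps0.
Proof.
  destruct tau_triangle as [_ [_ [_ [_ [_ tau_eps0]]]]].
  intros SE gammaE [s_pos _]; unfold simple_integral, bigoplus.
  induction s as [|[c A] s IH]; simpl; [reflexivity|].
  destruct (s_pos (c, A) (or_introl eq_refl)) as [c_pos SA]; simpl in c_pos, SA.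
  rewrite IH by (intros p hp; apply s_pos; right; exact hp).
  rewrite decomposable_measure_inter_eps0, dscale_eps0 by assumption.
  apply tau_eps0, in_Dplus_eps0.
Qed.

End DecomposableMeasure.

Lemma in_S_nil {Om : Type} (Sigma : (Om -> Prop) -> Prop) (f : Om -> Rbar) (E : Om -> Prop) :
  (forall w, Rbar_le (Finite 0) (f w)) -> in_S Sigma f E nil.
Proof.
  intro f_nonneg; split.
  - split; [intros p []|intros i j hij; simpl in hij; lia].
  - intros w _; apply f_nonneg.
Qed.

Lemma integral_is_const {Om : Type} (tau : dfun -> dfun -> dfun)
  (Sigma : (Om -> Prop) -> Prop) (gamma : (Om -> Prop) -> dfun)
  (f : Om -> Rbar) (E : Om -> Prop) (G : dfun) (s0 : list (R * (Om -> Prop))) :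
  in_Dplus G -> in_S Sigma f E s0 ->
  (forall s, in_S Sigma f E s -> simple_integral tau gamma E s = G) ->
  integral_is tau Sigma gamma f E G.
Proof.
  intros G_Dplus s0_in integral_G; split; [exact G_Dplus|split].
  - intros s s_in; rewrite integral_G by exact s_in; intro x; apply Rle_refl.
  - intros H _ H_lower; rewrite <- (integral_G s0 s0_in); exact (H_lower s0 s0_in).
Qed.

Theorem theorem4p12 (Om : Type) (tau : dfun -> dfun -> dfun)
  (Sigma : (Om -> Prop) -> Prop) (gamma : (Om -> Prop) -> dfun) (E : Om -> Prop) :
  inhabited Om ->
  is_triangle_function tau -> is_distributive tau ->
  is_ring_of_sets Sigma ->
  is_decomposable_measure tau Sigma gamma ->
  Sigma E -> gamma E = eps0 ->
  forall f : Om -> Rbar,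
    (forall w, Rbar_le (Finite 0) (f w)) ->
    measurable_fun_ Sigma f ->
    integrable tau Sigma gamma f E ->
    integral_is tau Sigma gamma f E eps0.
Proof.
  intros _ tau_triangle _ Sigma_ring gamma_decomposable SE gammaE f f_nonneg _ _.
  apply (integral_is_const _ _ _ _ _ _ nil in_Dplus_eps0 (in_S_nil Sigma f E f_nonneg)).
  intros s [s_rep _].
  apply (simple_integral_eps0 Om tau Sigma gamma); assumption.
Qed.
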